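(* Let $m\ge 2$, $n\ge1$ and $1\le u\le n$ be integers. Then $$\big(\dim\mathcal H_n^m\big)^{-2}\sum_{i=0}^{u-1}d_{\lambda_{n-i}}\;=\;1-\Big[\prod_{i=1}^{u}\frac{n-i+1}{n+m-i}\Big]^2 ,$$ where $d_{\lambda_k}$ is the dimension of $\lambda_k$ and $\dim\mathcal H_n^m=\binom{n+m-1}{n}$.
   Context: For $k\in\mathbb N$, $\lambda_k$ denotes the irreducible representation of $\mathrm{SU}(m)$ with Young diagram $(2k,k,\dots,k,0)$, i.e. first row of $2k$ boxes, rows $2,\dots,m-1$ of $k$ boxes each, and empty $m$-th row; $d_{\lambda_k}$ is its dimension. $\mathcal H_n^m$ is the space of $n$ bosons in $m$ modes, of dimension $\binom{n+m-1}{n}$. *)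

From mathcomp Require Import all_boot all_order all_algebra.
Set Implicit Arguments. Unset Strict Implicit. Unset Printing Implicit Defensive.
Import Order.TTheory GRing.Theory Num.Theory.
Local Open Scope ring_scope.

(* Row lengths (0-indexed rows 0..m-1) of the Young diagram (2k,k,...,k,0)
   with m rows: row 0 has 2k boxes, rows 1..m-2 have k boxes, row m-1 is empty. *)
Definition lambda_row (m k : nat) (i : nat) : nat :=
  if i == 0%N then (2 * k)%N else if (i < m.-1)%N then k else 0%N.

(* Dimension of the irreducible SU(m)-representation with highest weight
   given by the partition lam (rows 0..m-1), via the Weyl dimension formula
   d_lam = prod_{i<j} (lam_i - lam_j + j - i) / (j - i). *)
Definition weyl_dim (m : nat) (lam : nat -> nat) : rat :=
  \prod_(i < m) \prod_(j < m | (i < j)%N)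
     (((lam i)%:R - (lam j)%:R + (j : nat)%:R - (i : nat)%:R)
        / ((j : nat)%:R - (i : nat)%:R)).

Definition d_lambda (m k : nat) : rat := weyl_dim m (lambda_row m k).

Definition dimH (m n : nat) : nat := 'C(n + m - 1, n).

(* By the Weyl dimension formula d_{lambda_k} = C(k+m-2, m-2)^2 (2k+m-1)/(m-1),
   and this is exactly D_k^2 - D_{k-1}^2 for D_k := dim H_k^m = C(k+m-1, m-1).
   Hence the sum telescopes to D_n^2 - D_{n-u}^2; since D_{k-1}/D_k = k/(k+m-1),
   the product telescopes to D_{n-u}/D_n, and the identity follows. *)
From mathcomp Require Import all_boot all_order all_algebra.
From mathcomp Require Import zify ring.
Import Order.TTheory GRing.Theory Num.Theory.
Local Open Scope ring_scope.

Lemma prod_div_bin (R : numFieldType) (p k : nat) :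
  \prod_(1 <= t < p.+1) ((k + t)%:R / t%:R) = 'C(k + p, p)%:R :> R.
Proof.
elim: p => [|p IHp]; first by rewrite big_geq // addn0 bin0.
have p1_neq0 : p.+1%:R != 0 :> R by rewrite pnatr_eq0.
rewrite big_nat_recr //= IHp addnS -[RHS](mulKf p1_neq0) -natrM -mul_bin_diag.
by rewrite natrM /=; ring.
Qed.

Definition weyl_factor (lam : nat -> nat) (i j : nat) : rat :=
  ((lam i)%:R - (lam j)%:R + j%:R - i%:R) / (j%:R - i%:R).

Lemma weyl_dimE (m : nat) (lam : nat -> nat) :
  weyl_dim m lam = \prod_(0 <= i < m) \prod_(i.+1 <= j < m) weyl_factor lam i j.
Proof.
rewrite /weyl_dim big_mkord; apply: eq_bigr => i _.
by rewrite big_geq_mkord.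
Qed.

Lemma weyl_factor_eq_rows (lam : nat -> nat) (i j : nat) :
  (i < j)%N -> lam i = lam j -> weyl_factor lam i j = 1.
Proof.
move=> lt_ij eq_lam; rewrite /weyl_factor eq_lam subrr add0r divff //.
by rewrite subr_eq0 eqr_nat neq_ltn lt_ij orbT.
Qed.

Section LambdaDimension.

Variable p : nat.
Local Notation m := p.+2.
Local Notation lam k := (lambda_row m k).

Lemma lambda_row_mid (k i : nat) : (0 < i < p.+1)%N -> lam k i = k.
Proof. by case: i => //= i ltip; rewrite /lambda_row ltip. Qed.

Lemma lambda_row_last (k : nat) : lam k p.+1 = 0%N.
Proof. by rewrite /lambda_row ltnn. Qed.

Lemma weyl_row0 (k : nat) :
  \prod_(1 <= j < m) weyl_factor (lam k) 0 j
  = 'C(k + p, p)%:R * (2 * k%:R + p.+1%:R) / p.+1%:R.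
Proof.
rewrite big_nat_recr //= -(prod_div_bin _ p k) /weyl_factor lambda_row_last.
rewrite -mulrA; congr (_ * _).
  apply: eq_big_nat => j ltj; rewrite (lambda_row_mid k j ltj) /lambda_row /=.
  by rewrite !subr0 natrD natrM; congr (_ / _); ring.
by rewrite /lambda_row /= !subr0 natrM.
Qed.

Lemma weyl_row_mid (k i : nat) : (0 < i < p.+1)%N ->
  \prod_(i.+1 <= j < m) weyl_factor (lam k) i j
  = (k + (p.+1 - i))%:R / (p.+1 - i)%:R.
Proof.
move=> lt0ip; rewrite big_nat_recr /=; last by lia.
rewrite big_nat_cond big1 ?mul1r => [|j /andP[ltj _]]; last first.
  by apply: weyl_factor_eq_rows; rewrite ?lambda_row_mid //; lia.
have le_ip : (i <= p.+1)%N by lia.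
rewrite /weyl_factor lambda_row_last (lambda_row_mid k i lt0ip) subr0.
by rewrite natrD natrB // addrA.
Qed.

Lemma d_lambdaE (k : nat) :
  d_lambda m k = 'C(k + p, p)%:R ^+ 2 * (2 * k%:R + p.+1%:R) / p.+1%:R.
Proof.
rewrite /d_lambda weyl_dimE big_ltn // weyl_row0 big_nat_recr //=.
rewrite [X in _ * (_ * X)]big_geq // mulr1.
have -> : \prod_(1 <= i < p.+1) \prod_(i.+1 <= j < m) weyl_factor (lam k) i j
          = 'C(k + p, p)%:R.
  rewrite -(prod_div_bin _ p k) (eq_big_nat _ _ (weyl_row_mid k)) big_nat_rev /=.
  by apply: eq_big_nat => t /andP[_ ltt]; rewrite subSS subKn // ltnW.
by rewrite expr2; ring.
Qed.

End LambdaDimension.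

Lemma dimH_bin (p k : nat) : dimH p.+2 k = 'C(k + p.+1, p.+1).
Proof. by rewrite /dimH addnS subn1 succnK -[RHS]bin_sub ?leq_addl // addnK. Qed.

Lemma dimH_gt0 (p k : nat) : (0 < dimH p.+2 k)%N.
Proof. by rewrite dimH_bin bin_gt0 leq_addl. Qed.

Lemma dimH_mul_diag (p k : nat) :
  (p.+1 * dimH p.+2 k = (k + p).+1 * 'C(k + p, p))%N.
Proof. by rewrite dimH_bin addnS -mul_bin_diag. Qed.

Lemma dimH_mul_left (p k : nat) :
  (p.+1 * dimH p.+2 k = k.+1 * 'C(k.+1 + p, p))%N.
Proof. by rewrite dimH_bin -addSnnS mul_bin_left addnK. Qed.

Lemma dimH_succ_ratio (p k : nat) :
  (dimH p.+2 k * (k + p.+2) = dimH p.+2 k.+1 * k.+1)%N.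
Proof.
apply/eqP; rewrite -(eqn_pmul2l (ltn0Sn p)) !mulnA dimH_mul_left dimH_mul_diag.
by apply/eqP; ring.
Qed.

Section Telescoping.

Variable p : nat.
Local Notation D k := ((dimH p.+2 k)%:R : rat).

Lemma dimH_neq0 (k : nat) : D k != 0.
Proof. by rewrite pnatr_eq0 -lt0n dimH_gt0. Qed.

Lemma d_lambda_succ (k : nat) : d_lambda p.+2 k.+1 = D k.+1 ^+ 2 - D k ^+ 2.
Proof.
have p1_neq0 : p.+1%:R != 0 :> rat by rewrite pnatr_eq0.
apply: (mulfI (expf_neq0 2 p1_neq0)).
rewrite mulrBr -!exprMn -!natrM dimH_mul_diag dimH_mul_left d_lambdaE.
by rewrite !natrM -addnS natrD; field; rewrite addrC natr1.
Qed.

Lemma dimH_ratio (k : nat) : k.+1%:R / (k + p.+2)%:R = D k / D k.+1.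
Proof.
apply/eqP; rewrite eqr_div ?dimH_neq0 ?pnatr_eq0 ?addnS //.
by rewrite -!natrM -!addnS dimH_succ_ratio mulnC.
Qed.

Lemma sum_d_lambda (n u : nat) : (u <= n)%N ->
  \sum_(0 <= i < u) d_lambda p.+2 (n - i) = D n ^+ 2 - D (n - u) ^+ 2.
Proof.
elim: u => [|u IHu] lt_un; first by rewrite big_geq // subn0 subrr.
rewrite big_nat_recr //= (IHu (ltnW lt_un)) -(subnSK lt_un) d_lambda_succ.
by rewrite addrA subrK.
Qed.

Lemma prod_dimH_ratio (n u : nat) : (u <= n)%N ->
  \prod_(1 <= i < u.+1) ((n - i + 1)%:R / (n + p.+2 - i)%:R) = D (n - u) / D n.
Proof.
elim: u => [|u IHu] lt_un; first by rewrite big_geq // subn0 divff ?dimH_neq0.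
rewrite big_nat_recr //= (IHu (ltnW lt_un)) addn1 -addnBAC // dimH_ratio.
by rewrite -(subnSK lt_un) mulrC mulrA divfK ?dimH_neq0.
Qed.

End Telescoping.

Theorem mainTheorem3 (m n u : nat) (hm : (2 <= m)%N) (hn : (1 <= n)%N)
    (hu1 : (1 <= u)%N) (hun : (u <= n)%N) :
  ((dimH m n)%:R : rat) ^- 2 * \sum_(0 <= i < u) d_lambda m (n - i)
  = 1 - (\prod_(1 <= i < u.+1) ((n - i + 1)%:R / (n + m - i)%:R)) ^+ 2.
Proof.
case: m hm => [|[|p]] // _.
rewrite sum_d_lambda // prod_dimH_ratio //.
by field; rewrite dimH_neq0.
Qed.
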